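(* Let $R$ be a noetherian integral domain, $n\ge1$, $R[n]=R[t]/(t^n)$, and $M$ an $R[n]$-module of finite type. Then $\mathrm{Ext}^1_{R[n]}(M,R[n])$ is a torsion module.
   Context: An element $u=\sum_{i=0}^{n-1}u_it^i\in R[n]$ ($u_i\in R$) is a non-zero-divisor iff $u_0\ne0$; let $S_n$ be the set of non-zero-divisors. For an $R[n]$-module $N$, the torsion submodule $T(N)$ is the set of $m\in N$ such that $\alpha m=0$ for some $\alpha\in S_n$; $N$ is a torsion module if $N=T(N)$. *)

From HB Require Import structures.
From mathcomp Require Import all_boot all_order all_algebra.
Set Implicit Arguments. Unset Strict Implicit. Unset Printing Implicit Defensive.
Import GRing.Theory.
Local Open Scope ring_scope.

(* R[n] = R[t]/(t^n), realised as MathComp's quotient ring {poly %/ 'X^n}.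
   (For n = 0 MathComp's construction degenerates to R[t]/(t); the theorem
   assumes 0 < n, as in the paper.) *)
Definition Rn (R : comNzRingType) (n : nat) := {poly %/ ('X^n : {poly R})}.

Definition is_ideal (R : comNzRingType) (I : R -> Prop) : Prop :=
  [/\ I 0, (forall x y, I x -> I y -> I (x + y)) & (forall r x, I x -> I (r * x))].

Definition noetherian (R : comNzRingType) : Prop :=
  forall I : R -> Prop, is_ideal I ->
    exists s : seq R, forall x, I x <->
      exists c : 'I_(size s) -> R, x = \sum_(i < size s) c i * s`_i.

Definition nzd (A : comNzRingType) (a : A) : Prop :=
  forall b : A, a * b = 0 -> b = 0.

Definition generates (A : comNzRingType) (M : lmodType A) (k : nat)
  (x : 'I_k -> M) : Prop :=
  forall m : M, exists c : 'I_k -> A, m = \sum_(i < k) c i *: x i.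

Definition finite_type (A : comNzRingType) (M : lmodType A) : Prop :=
  exists k (x : 'I_k -> M), generates x.

Definition relmod (A : comNzRingType) (M : lmodType A) (k : nat)
  (x : 'I_k -> M) (u : 'rV[A]_k) : Prop :=
  \sum_(i < k) u 0 i *: x i = 0.

(* Given the presentation 0 -> K -> A^k -> M -> 0, one has
   Ext^1_A(M, A) = coker (Hom_A(A^k, A) -> Hom_A(K, A)).
   Ext^1_A(M,A) is torsion iff for every A-linear f : K -> A there is a
   non-zero-divisor alpha with alpha * f extending to an A-linear map
   A^k -> A (given by a column vector c). *)
Definition ext1_torsion_wrt (A : comNzRingType) (M : lmodType A) (k : nat)
  (x : 'I_k -> M) : Prop :=
  forall f : 'rV[A]_k -> A,
    (forall u v, relmod x u -> relmod x v -> f (u + v) = f u + f v) ->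
    (forall (a : A) u, relmod x u -> f (a *: u) = a * f u) ->
    exists alpha : A, nzd alpha /\
      exists c : 'cV[A]_k, forall u, relmod x u -> alpha * f u = (u *m c) 0 0.

(* Ext^1_A(M, A) is a torsion module (computed from any finite presentation;
   the answer is independent of the presentation). *)
Definition Ext1_torsion (A : comNzRingType) (M : lmodType A) : Prop :=
  forall k (x : 'I_k -> M), generates x -> ext1_torsion_wrt x.

From HB Require Import structures.
From mathcomp Require Import all_boot all_order all_algebra.
From Stdlib Require Import Classical.
Set Implicit Arguments. Unset Strict Implicit. Unset Printing Implicit Defensive.
Import GRing.Theory.
Local Open Scope ring_scope.

(* Let K be the module of relations of generators x_1..x_k of M, so that a class
   in Ext^1 is represented by an A-linear f : K -> A, A = R[t]/(t^n), and we must
   extend d f to A^k for some nonzero d in R.  Taking the coefficient of t^(n-1)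
   ("top") gives a nondegenerate pairing (a, b) |-> top (a b) on A: the
   coefficient of t^j in f u is top (f (t^(n-1-j) u)).  So it suffices to extend the R-linear
   functional u |-> top (f u) on K, viewed as an R-submodule of R^(kn).  Over the
   fraction field F this functional is determined by its values on finitely many
   elements of K spanning F K, hence is given by a vector of F^(kn); clearing
   denominators gives d and an integral vector, which the pairing turns back into
   a column of A^k. *)

Local Notation tofrac := (@FracField.tofrac _).
Local Notation "x %:F" := (tofrac x).
Local Notation "A ^F" := (map_mx tofrac A) : ring_scope.

Section ClearDenominators.
Variable R : idomainType.

Lemma tofrac_inj : injective (tofrac : R -> {fraction R}).
Proof. by move=> a b /eqP; rewrite tofrac_eq => /eqP. Qed.

Lemma map_tofrac_inj p q : injective (map_mx tofrac : 'M[R]_(p, q) -> _).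
Proof.
move=> A B /matrixP AB; apply/matrixP => i j; apply: tofrac_inj.
by have := AB i j; rewrite !mxE.
Qed.

Lemma tofrac_numden (x : {fraction R}) : exists a b : R, b != 0 /\ x * b%:F = a%:F.
Proof.
elim/quotW: x => r; exists \n_r, \d_r; split; first exact: denom_ratioP.
rewrite !piE; apply/eqmodP; rewrite /= FracField.equivfE /FracField.mulf.
by rewrite !numden_Ratio ?mulf_neq0 ?oner_neq0 ?denom_ratioP //= !mulr1 mulrC.
Qed.

Lemma mx_clear_denominators p q (X : 'M[{fraction R}]_(p, q)) :
  exists2 d : R, d != 0 & exists Y : 'M[R]_(p, q), Y^F = d%:F *: X.
Proof.
have /fin_all_exists [ab abE] : forall ij : 'I_p * 'I_q,
    exists ab : R * R, ab.2 != 0 /\ X ij.1 ij.2 * ab.2%:F = ab.1%:F.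
  by move=> ij; have [a [b bX]] := tofrac_numden (X ij.1 ij.2); exists (a, b).
exists (\prod_ij (ab ij).2).
  by rewrite prodf_seq_neq0; apply/allP => ij _; case: (abE ij).
exists (\matrix_(i, j) ((ab (i, j)).1 * \prod_(kl | kl != (i, j)) (ab kl).2)).
apply/matrixP => i j; rewrite !mxE [in RHS](bigD1 (i, j)) //= !tofracM.
by case: (abE (i, j)) => _ <-; rewrite [RHS]mulrC mulrA.
Qed.

End ClearDenominators.

Lemma bounded_exists_max (Q : nat -> Prop) b :
  (exists r, Q r) -> (forall r, Q r -> (r <= b)%N) ->
  exists2 r, Q r & forall r', Q r' -> (r' <= r)%N.
Proof.
move=> [r0 Qr0] Qb; apply: NNPP => nomax.
have above j : exists2 r, Q r & (j <= r)%N.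
  elim: j => [|j [r Qr jr]]; first by exists r0.
  apply: NNPP => none; apply: nomax; exists r => // r' Qr'.
  rewrite leqNgt; apply/negP => rr'; apply: none.
  by exists r'; last exact: leq_ltn_trans rr'.
by have [r /Qb rb] := above b.+1; rewrite ltnNge rb.
Qed.

Section ScaledExtension.
Variables (R : idomainType) (m : nat) (P : 'rV[R]_m -> Prop) (phi : 'rV[R]_m -> R).
Hypotheses (P0 : P 0) (PD : forall u v, P u -> P v -> P (u + v))
  (PZ : forall a u, P u -> P (a *: u))
  (phiD : forall u v, P u -> P v -> phi (u + v) = phi u + phi v)
  (phiZ : forall a u, P u -> phi (a *: u) = a * phi u).

Definition phi_col r (S : 'M[R]_(r, m)) : 'cV[R]_r := \col_i phi (row i S).

Lemma phi_mulmx r (S : 'M[R]_(r, m)) (w : 'rV[R]_r) : (forall i, P (row i S)) ->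
  P (w *m S) /\ phi (w *m S) = (w *m phi_col S) 0 0.
Proof.
move=> PS; rewrite mulmx_sum_row mxE.
elim/big_rec2: _ => [|i a v _ [Pv <-]].
  by split=> //; rewrite -(scale0r 0) phiZ ?mul0r.
have PwS : P (w 0 i *: row i S) by apply: PZ.
by split; [apply: PD | rewrite phiD // phiZ // mxE].
Qed.

Lemma spanning_rows : exists r (S : 'M[R]_(r, m)),
  (forall i, P (row i S)) /\ forall u, P u -> (u^F <= S^F)%MS.
Proof.
pose Q d := exists r (S : 'M[R]_(r, m)), (forall i, P (row i S)) /\ \rank S^F = d.
have Q0 : Q 0%N by exists 0%N, 0; split; [case | rewrite map_mx0 mxrank0].
have Qm d : Q d -> (d <= m)%N by move=> [r [S [_ <-]]]; exact: rank_leq_col.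
have [_ [r [S [PS <-]]] maxS] := bounded_exists_max (ex_intro _ _ Q0) Qm.
exists r, S; split=> // u Pu; apply/idPn => notsub.
have PuS i : P (row i (col_mx u S)).
  by case: (split_ordP i) => j ->; rewrite ?rowKu ?rowKd ?row_id.
have /maxS : Q (\rank (col_mx u S)^F) by exists r.+1, (col_mx u S).
apply/negP; rewrite -ltnNge map_col_mx.
have subS : (S^F <= col_mx u^F S^F)%MS by rewrite -addsmxE addsmxSr.
by rewrite (ltn_leqif (mxrank_leqif_sup subS)) col_mx_sub submx_refl andbT.
Qed.

Lemma tofrac_phi_combination r (S : 'M[R]_(r, m)) (z : 'rV[{fraction R}]_r) u :
  (forall i, P (row i S)) -> P u -> z *m S^F = u^F ->
  (phi u)%:F = (z *m (phi_col S)^F) 0 0.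
Proof.
move=> PS Pu zS; have [e e0 [w wE]] := mx_clear_denominators z.
have ewS : e *: u = w *m S.
  by apply: map_tofrac_inj; rewrite map_mxZ map_mxM wE -scalemxAl zS.
have [_ phiwS] := phi_mulmx w PS.
have e0F : e%:F != 0 by rewrite tofrac_eq0.
apply: (mulfI e0F); rewrite -tofracM -phiZ // ewS phiwS.
transitivity (((w *m phi_col S)^F) 0 0); first by rewrite [RHS]mxE.
by rewrite map_mxM wE -scalemxAl mxE.
Qed.

Theorem scaled_functional_extension : exists2 d : R, d != 0 &
  exists gamma : 'cV[R]_m, forall u, P u -> d * phi u = (u *m gamma) 0 0.
Proof.
have [r [S [PS spanS]]] := spanning_rows.
pose gF := pinvmx S^F *m (phi_col S)^F.
have phiF u : P u -> (phi u)%:F = (u^F *m gF) 0 0.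
  move=> Pu; rewrite mulmxA; apply: tofrac_phi_combination => //.
  exact: mulmxKpV (spanS u Pu).
have [d d0 [gamma gammaE]] := mx_clear_denominators gF.
exists d => //; exists gamma => u Pu; apply: tofrac_inj.
transitivity (((u *m gamma)^F) 0 0); last by rewrite [LHS]mxE.
by rewrite tofracM phiF // map_mxM gammaE -scalemxAr [RHS]mxE.
Qed.

End ScaledExtension.

Section TruncatedPolynomials.
Variables (R : comNzRingType) (n : nat).
Local Notation A := (Rn R n.+1).
Local Notation in_Rn := (in_qpoly ('X^(n.+1) : {poly R})).

Lemma size_mk_monic_Xn : size (mk_monic ('X^(n.+1) : {poly R})) = n.+2.
Proof. by rewrite mk_monic_Xn size_polyXn. Qed.

Lemma in_Rn_small (p : {poly R}) : (size p <= n.+1)%N -> (in_Rn p : {poly R}) = p.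
Proof. by move=> sp; rewrite in_qpoly_small // size_mk_monic_Xn. Qed.

Lemma size_Rn (a : A) : (size (a : {poly R}) <= n.+1)%N.
Proof. exact: leq_trans (size_mk_monic a) (eq_leq size_mk_monic_Xn). Qed.

Lemma coef_Rn_gt (a : A) j : (n < j)%N -> (a : {poly R})`_j = 0.
Proof. by move=> nj; apply: nth_default; apply: leq_trans nj; apply: size_Rn. Qed.

Lemma Rn_coefP (a b : A) :
  (forall j, (j <= n)%N -> (a : {poly R})`_j = (b : {poly R})`_j) -> a = b.
Proof.
move=> ab; apply: val_inj; apply/polyP => j.
by case: (leqP j n) => [/ab | nj]; last rewrite !coef_Rn_gt.
Qed.

Lemma coef_mul_Rn (a b : A) j :
  (j <= n)%N -> ((a * b : A) : {poly R})`_j = ((a : {poly R}) * b)`_j.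
Proof.
move=> jn; rewrite poly_of_qpolyM; move: (_ * _) => p; rewrite mk_monic_Xn /=.
rewrite [in RHS](Pdiv.RingMonic.rdivp_eq (monicXn R n.+1) p).
by rewrite coefD coefMXn ltnS jn add0r.
Qed.

Definition topcoef (a : A) : R := (a : {poly R})`_n.

Definition top_shift (j : nat) : A := in_Rn 'X^(n - j).

Lemma topcoef_mul_top_shift (a : A) j :
  (j <= n)%N -> topcoef (top_shift j * a) = (a : {poly R})`_j.
Proof.
move=> jn; rewrite /topcoef coef_mul_Rn // in_Rn_small ?size_polyXn ?ltnS ?leq_subr //.
by rewrite coefXnM ltnNge leq_subr subKn.
Qed.

Lemma topcoefD (a b : A) : topcoef (a + b) = topcoef a + topcoef b.
Proof. by rewrite /topcoef poly_of_qpolyD coefD. Qed.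

Lemma topcoef_sum I (r : seq I) (F : I -> A) :
  topcoef (\sum_(i <- r) F i) = \sum_(i <- r) topcoef (F i).
Proof. by rewrite /topcoef poly_of_qpoly_sum coef_sum. Qed.

Lemma topcoef_mul (a b : A) :
  topcoef (a * b) = \sum_(j < n.+1) (a : {poly R})`_j * (b : {poly R})`_(n - j).
Proof. by rewrite /topcoef coef_mul_Rn // coefM. Qed.

Lemma topcoefZ (e : R) (a : A) : topcoef (e *: a) = e * topcoef a.
Proof. by rewrite /topcoef poly_of_qpolyZ coefZ. Qed.

Variable k : nat.

Definition coefs (u : 'rV[A]_k) : 'rV[R]_(k * n.+1) :=
  mxvec (\matrix_(i, j) (u 0 i : {poly R})`_j).

Definition of_coefs (v : 'rV[R]_(k * n.+1)) : 'rV[A]_k :=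
  \row_i in_Rn (\poly_(j < n.+1) vec_mx v i (inord j)).

Lemma coefsK : cancel coefs of_coefs.
Proof.
move=> u; apply/rowP => i; apply: Rn_coefP => j jn.
by rewrite !mxE mxvecK in_Rn_small ?size_poly // coef_poly ltnS jn mxE inordK.
Qed.

Lemma of_coefsD v w : of_coefs (v + w) = of_coefs v + of_coefs w.
Proof.
apply/rowP => i; rewrite !mxE -in_qpolyD; congr in_qpoly.
by apply/polyP => j; rewrite coefD !coef_poly; case: ltnP; rewrite ?addr0 ?linearD ?mxE.
Qed.

Lemma of_coefsZ (e : R) v : of_coefs (e *: v) = e%:A *: of_coefs v.
Proof.
apply/rowP => i; rewrite !mxE mulr_algl -in_qpolyZ; congr in_qpoly.
by apply/polyP => j; rewrite coefZ !coef_poly; case: ltnP; rewrite ?mulr0 ?linearZ ?mxE.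
Qed.

Lemma of_coefs0 : of_coefs 0 = 0.
Proof. by rewrite -(scale0r (0 : 'rV[R]_(k * n.+1))) of_coefsZ !scale0r. Qed.

Definition dual_col (g : 'cV[R]_(k * n.+1)) : 'cV[A]_k :=
  \col_i in_Rn (\poly_(l < n.+1) g (mxvec_index i (inord (n - l))) 0).

Lemma topcoef_mul_dual_col (w : 'rV[A]_k) g :
  topcoef ((w *m dual_col g) 0 0) = (coefs w *m g) 0 0.
Proof.
rewrite !mxE (reindex _ (curry_mxvec_bij _ _)) topcoef_sum.
under [LHS]eq_bigr do rewrite topcoef_mul.
rewrite pair_bigA; apply: eq_bigr => -[i j] _ /=.
rewrite mxvecE [dual_col _ _ _]mxE [in RHS]mxE in_Rn_small ?size_poly //.
rewrite coef_poly ltnS leq_subr.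
by rewrite (subKn (leq_ord j)) inord_val.
Qed.

End TruncatedPolynomials.

Section Relations.
Variables (A : comNzRingType) (M : lmodType A) (k : nat) (x : 'I_k -> M).

Lemma relmod0 : relmod x 0.
Proof. by rewrite /relmod big1 // => i _; rewrite mxE scale0r. Qed.

Lemma relmodD u v : relmod x u -> relmod x v -> relmod x (u + v).
Proof.
rewrite /relmod => xu xv; under eq_bigr do rewrite mxE scalerDl.
by rewrite big_split /= xu xv addr0.
Qed.

Lemma relmodZ a u : relmod x u -> relmod x (a *: u).
Proof.
rewrite /relmod => xu; under eq_bigr do rewrite mxE -scalerA.
by rewrite -scaler_sumr xu scaler0.
Qed.

End Relations.

Lemma qpoly_alg_nzd (R : idomainType) (h : {poly R}) (d : R) :
  d != 0 -> nzd (d%:A : {poly %/ h}).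
Proof.
move=> d0 b; rewrite mulr_algl => /(congr1 (fun a : {poly %/ h} => a : {poly R})).
rewrite poly_of_qpolyZ => /eqP; rewrite scale_poly_eq0 (negPf d0) /= => /eqP b0.
exact: val_inj.
Qed.

Theorem proposition3p4p2 (R : idomainType) (n : nat) (Rnoeth : noetherian R)
  (hn : (0 < n)%N) (M : lmodType (Rn R n)) (hM : finite_type M) :
  Ext1_torsion M.
Proof.
case: n hn M hM => [//|n] _ M _ k x _ f fD fZ.
pose P (v : 'rV[R]_(k * n.+1)) := relmod x (of_coefs v).
pose phi (v : 'rV[R]_(k * n.+1)) := topcoef (f (of_coefs v)).
have [d d0 [gamma phiE]] : exists2 d : R, d != 0 &
    exists gamma : 'cV_(k * n.+1), forall v, P v -> d * phi v = (v *m gamma) 0 0.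
  apply: scaled_functional_extension; rewrite /P /phi.
  - by rewrite of_coefs0; apply: relmod0.
  - by move=> v w; rewrite of_coefsD; apply: relmodD.
  - by move=> e v; rewrite of_coefsZ; apply: relmodZ.
  - by move=> v w Pv Pw; rewrite of_coefsD fD // topcoefD.
  - by move=> e v Pv; rewrite of_coefsZ fZ // mulr_algl topcoefZ.
have topE u : relmod x u -> d * topcoef (f u) = (coefs u *m gamma) 0 0.
  by move=> xu; rewrite -phiE /P /phi coefsK.
exists d%:A; split; first exact: qpoly_alg_nzd.
exists (dual_col gamma) => u xu; apply: Rn_coefP => j jn.
rewrite mulr_algl poly_of_qpolyZ coefZ -(topcoef_mul_top_shift (f u) jn) -fZ //.
rewrite topE; last exact: relmodZ.
by rewrite -topcoef_mul_dual_col -scalemxAl [_ 0 0]mxE topcoef_mul_top_shift.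
Qed.
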